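(* For all integers $k\geq 3$ and $m\geq 1$ there are mutually disjoint combinatorial lines $L_1,\dots,L_m\subseteq[k]^{2m}$ such that the only quasilines $L\subseteq L_1\cup\dots\cup L_m$ are $L_1,\dots,L_m$ themselves.
   Context: A combinatorial line in $[k]^n$ is a set $\{\eta(i)\colon i\in[k]\}$ where, for some partition $[n]=C\cup M$ with $M\neq\emptyset$ and values $u_c\in[k]$ ($c\in C$), $\eta(i)$ has $c$-th coordinate $u_c$ for $c\in C$ and $m$-th coordinate $i$ for $m\in M$. A quasiline in $[k]^n$ is a $k$-element subset $L$ such that for every coordinate the entries of the points of $L$ in that coordinate are either all identical or mutually distinct. *)

From mathcomp Require Import all_boot.
Set Implicit Arguments. Unset Strict Implicit. Unset Printing Implicit Defensive.

(* Points of [k]^n : functions from coordinates 'I_n to values 'I_k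
   ([k] = {1..k} is represented by 'I_k = {0..k-1}). *)
Definition point (k n : nat) := {ffun 'I_n -> 'I_k}.

Definition line_point (k n : nat) (M : {set 'I_n}) (u : point k n) (i : 'I_k)
  : point k n := [ffun c => if c \in M then i else u c].

(* Combinatorial line: { eta(i) : i in [k] } for some nonempty M
   (the complement C is the set of fixed coordinates, values u_c). *)
Definition comb_line (k n : nat) (L : {set point k n}) : Prop :=
  exists (M : {set 'I_n}) (u : point k n),
    M != set0 /\ L = [set line_point M u i | i : 'I_k].

Definition quasiline (k n : nat) (L : {set point k n}) : Prop :=
  #|L| = k /\
  forall c : 'I_n,
    (forall x y, x \in L -> y \in L -> x c = y c) \/
    (forall x y, x \in L -> y \in L -> x != y -> x c != y c).

From mathcomp Require Import all_boot.
From mathcomp Require Import zify.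
Set Implicit Arguments. Unset Strict Implicit.

(* Group the 2m coordinates into m pairs (2j, 2j+1), fix two values a != b,
   and let L_i run diagonally through the i-th pair while every other pair is
   frozen at (a, b).  A point of the union lies on L_j iff its j-th pair is
   diagonal.  If a quasiline L inside the union had two distinct points off
   L_j, both would read (a, b) on the j-th pair, and the quasiline condition
   would force every point of L to read (a, b) there, so L would miss L_j.
   Thus a quasiline meeting both L_i and L_j (i != j) has at most one point
   outside each of them, which is impossible with k >= 3 points; so L lies in
   a single L_i and equals it by counting. *)

Section QuasilineCoordinates.

Variables k n : nat.
Variable L : {set point k n}.
Hypothesis qL : quasiline L.

Lemma quasiline_coord_eq (x y z : point k n) (c : 'I_n) :
  x \in L -> y \in L -> z \in L -> x != y -> x c = y c -> z c = x c.
Proof.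
move=> xL yL zL nxy exy; have [all_eq | all_neq] := qL.2 c.
  exact: all_eq.
by move: (all_neq _ _ xL yL nxy); rewrite exy eqxx.
Qed.

Lemma quasiline_coord_neq (x y z : point k n) (c d : 'I_n) :
  x \in L -> y \in L -> z \in L -> x != y ->
  x c = y c -> x d = y d -> x c != x d -> z c != z d.
Proof.
move=> xL yL zL nxy exy_c exy_d.
by rewrite (quasiline_coord_eq xL yL zL nxy exy_c)
           (quasiline_coord_eq xL yL zL nxy exy_d).
Qed.

End QuasilineCoordinates.

Section BlockLines.

Variables k m : nat.

Lemma even_coord_subproof (j : 'I_m) : 2 * j < 2 * m.
Proof. by rewrite ltn_pmul2l. Qed.

Lemma odd_coord_subproof (j : 'I_m) : 2 * j + 1 < 2 * m.
Proof. by have := ltn_ord j; lia. Qed.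

Definition even_coord (j : 'I_m) : 'I_(2 * m) := Ordinal (even_coord_subproof j).
Definition odd_coord (j : 'I_m) : 'I_(2 * m) := Ordinal (odd_coord_subproof j).

Definition block (i : 'I_m) : {set 'I_(2 * m)} := [set c : 'I_(2 * m) | c %/ 2 == i].

Variables a b : 'I_k.

Definition alt_point : point k (2 * m) := [ffun c : 'I_(2 * m) => if odd c then b else a].

Definition block_line (i : 'I_m) : {set point k (2 * m)} :=
  [set line_point (block i) alt_point t | t : 'I_k].

Lemma line_point_even_coord (i j : 'I_m) (t : 'I_k) :
  line_point (block i) alt_point t (even_coord j) = if j == i then t else a.
Proof.
rewrite !ffunE inE /=.
have -> : 2 * j %/ 2 = j by lia.
by rewrite oddM.
Qed.

Lemma line_point_odd_coord (i j : 'I_m) (t : 'I_k) :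
  line_point (block i) alt_point t (odd_coord j) = if j == i then t else b.
Proof.
rewrite !ffunE inE /=.
have -> : (2 * j + 1) %/ 2 = j by lia.
by rewrite oddD oddM.
Qed.

Lemma block_line_diag (j : 'I_m) (x : point k (2 * m)) :
  x \in block_line j -> x (even_coord j) = x (odd_coord j).
Proof.
by case/imsetP=> t _ ->; rewrite line_point_even_coord line_point_odd_coord eqxx.
Qed.

Lemma block_line_off (i j : 'I_m) (x : point k (2 * m)) :
  x \in block_line i -> i != j -> x (even_coord j) = a /\ x (odd_coord j) = b.
Proof.
case/imsetP=> t _ -> nij.
by rewrite line_point_even_coord line_point_odd_coord eq_sym (negbTE nij).
Qed.

Lemma comb_line_block_line (i : 'I_m) : comb_line (block_line i).
Proof.
exists (block i), alt_point; split=> //.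
by apply/set0Pn; exists (even_coord i); rewrite inE /=; apply/eqP; lia.
Qed.

Lemma card_block_line (i : 'I_m) : #|block_line i| = k.
Proof.
rewrite card_imset ?card_ord // => t s eq_ts.
move: (congr1 (fun x : point k (2 * m) => x (even_coord i)) eq_ts).
by rewrite /= !line_point_even_coord eqxx.
Qed.

Hypothesis neq_ab : a != b.

Lemma disjoint_block_lines (i j : 'I_m) :
  i != j -> [disjoint block_line i & block_line j].
Proof.
move=> nij; apply/pred0P=> x /=; apply/negbTE/andP=> [[x_i x_j]].
have [xa xb] := block_line_off x_i nij.
by move: neq_ab; rewrite -xa -xb (block_line_diag x_j) eqxx.
Qed.

Lemma bigcup_block_line_off (j : 'I_m) (x : point k (2 * m)) :
  x \in \bigcup_(i < m) block_line i -> x \notin block_line j ->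
  x (even_coord j) = a /\ x (odd_coord j) = b.
Proof.
case/bigcupP=> i _ x_i x_j; apply: (block_line_off x_i).
by apply: contraNneq x_j => <-.
Qed.

Lemma quasiline_outside_block_line_uniq (L : {set point k (2 * m)}) (j : 'I_m)
    (x y z : point k (2 * m)) :
  quasiline L -> L \subset \bigcup_(i < m) block_line i ->
  z \in L -> z \in block_line j ->
  x \in L -> x \notin block_line j -> y \in L -> y \notin block_line j ->
  x = y.
Proof.
move=> qL sLU zL z_j xL x_j yL y_j; apply/eqP/contraT=> nxy.
have [xa xb] := bigcup_block_line_off (subsetP sLU x xL) x_j.
have [ya yb] := bigcup_block_line_off (subsetP sLU y yL) y_j.
have := quasiline_coord_neq qL xL yL zL nxy (c := even_coord j) (d := odd_coord j).
by rewrite xa xb ya yb (block_line_diag z_j) eqxx => /(_ erefl erefl neq_ab).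
Qed.

Lemma quasiline_sub_block_line (L : {set point k (2 * m)}) (i : 'I_m)
    (p : point k (2 * m)) :
  2 < k -> quasiline L -> L \subset \bigcup_(i < m) block_line i ->
  p \in L -> p \in block_line i -> L \subset block_line i.
Proof.
move=> k_gt2 qL sLU pL p_i; have uniq_out := quasiline_outside_block_line_uniq qL sLU.
apply/subsetP=> q qL_q; apply/contraT=> q_i.
have [j _ q_j] := bigcupP (subsetP sLU q qL_q).
have nij : i != j by apply: contraNneq q_i => ->.
have [r rL r_pq] : exists2 r, r \in L & r \notin [set p; q].
  apply/subsetPn/negP=> /subset_leq_card.
  by rewrite cards2 qL.1; case: (p != q); lia.
(* p on L_i leaves room for only one point of L off L_i, namely q; then q on
   L_j forces the two points p, r of L_i (hence off L_j) to coincide. *)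
have r_i : r \in block_line i.
  apply/contraT=> r_i; move: r_pq.
  by rewrite (uniq_out _ _ _ _ pL p_i rL r_i qL_q q_i) !inE eqxx orbT.
have off_j x : x \in block_line i -> x \notin block_line j.
  by move=> x_i; rewrite (disjointFr (disjoint_block_lines nij) x_i).
move: r_pq; rewrite -(uniq_out _ _ _ _ qL_q q_j pL (off_j _ p_i) rL (off_j _ r_i)).
by rewrite !inE eqxx.
Qed.

Lemma quasiline_in_bigcup_block_line (L : {set point k (2 * m)}) :
  2 < k -> quasiline L -> L \subset \bigcup_(i < m) block_line i ->
  exists i, L = block_line i.
Proof.
move=> k_gt2 qL sLU.
have [p pL] : exists p, p \in L by apply/card_gt0P; rewrite qL.1; lia.
have [i _ p_i] := bigcupP (subsetP sLU p pL).
have sLi := quasiline_sub_block_line k_gt2 qL sLU pL p_i.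
by exists i; apply/eqP; rewrite eqEcard sLi card_block_line qL.1 leqnn.
Qed.

End BlockLines.

Theorem lemma4p2 (k m : nat) (hk : 3 <= k) (hm : 1 <= m) :
  exists Ls : 'I_m -> {set point k (2 * m)},
    (forall i, comb_line (Ls i)) /\
    (forall i j, i != j -> [disjoint Ls i & Ls j]) /\
    (forall L : {set point k (2 * m)},
        quasiline L -> L \subset \bigcup_(i < m) Ls i ->
        exists i, L = Ls i).
Proof.
have k_gt1 : 1 < k by lia.
pose a : 'I_k := Ordinal (ltnW k_gt1); pose b : 'I_k := Ordinal k_gt1.
have neq_ab : a != b by [].
exists (block_line a b); split; first exact: comb_line_block_line.
split; first exact: disjoint_block_lines.
by move=> L; apply: quasiline_in_bigcup_block_line.
Qed.
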